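(* In the setup described in the context, suppose the Ricci tensor of $(M,g,Q)$ is $$\rho=\frac{3\tau+\tau^*}{8}g+\frac{3\tau^*+\tau}{8}\tilde g .$$ Then the curvature tensor is $$R=\frac{\tau+\tau^*}{4}\pi_1+\frac{3\tau^*+\tau}{8}\pi_2,$$ where $$\pi_1(x,y,z,u)=g(y,z)g(x,u)-g(x,z)g(y,u),$$ $$\pi_2(x,y,z,u)=g(y,z)\tilde g(x,u)+g(x,u)\tilde g(y,z)-g(x,z)\tilde g(y,u)-g(y,u)\tilde g(x,z).$$
   Context: Let $M$ be a 3-dimensional smooth manifold. Fix a coordinate chart $(x^1,x^2,x^3)$ with coordinate vector fields $\partial_i$. Structures: - $g$ is a Riemannian metric with $g(\partial_1,\partial_1)=g(\partial_2,\partial_2)=A$, $g(\partial_3,\partial_3)=B$ and $g(\partial_i,\partial_j)=0$ for $i\ne j$. Here $A,B$ are smooth positive functions. - $Q$ is the $(1,1)$-tensor field with $Q\partial_1=\partial_2$, $Q\partial_2=-\partial_1$, $Q\partial_3=\partial_3$. - $P=Q^2$ and $\tilde g(x,y)=g(x,Py)$. Curvature: - $\nabla$ is the Levi-Civita connection of $g$. - $R(x,y)z=\nabla_x\nabla_yz-\nabla_y\nabla_xz-\nabla_{[x,y]}z$, and $R$ also denotes the $(0,4)$-tensor $R(x,y,z,t)=g(R(x,y)z,t)$. - $\rho(y,z)=g^{ij}R(e_i,y,z,e_j)$, $\tau=g^{ij}\rho_{ij}$ and $\tau^*=\tilde g^{ij}\rho_{ij}$. *)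

From Stdlib Require Import Reals Lra List.
From Coquelicot Require Import Coquelicot.
Open Scope R_scope.

(** The chart domain: points are coordinate triples (x^1,x^2,x^3), indices 0,1,2. *)
Definition pt : Type := (R * R * R)%type.

Definition shift (i : nat) (p : pt) (t : R) : pt :=
  match p with (x, y, z) =>
    match i with
    | O => (x + t, y, z)
    | S O => (x, y + t, z)
    | _ => (x, y, z + t)
    end
  end.

Definition pd (i : nat) (f : pt -> R) (p : pt) : R :=
  Derive (fun t => f (shift i p t)) 0.

Fixpoint iterpd (l : list nat) (f : pt -> R) : pt -> R :=
  match l with nil => f | i :: l' => pd i (iterpd l' f) end.

Definition smooth_on (U : pt -> Prop) (f : pt -> R) : Prop :=
  forall l : list nat, (forall i, In i l -> (i < 3)%nat) ->
  forall p, U p ->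
    continuous (iterpd l f) p /\
    (forall i, (i < 3)%nat -> ex_derive (fun t => iterpd l f (shift i p t)) 0).

Definition sum3 (f : nat -> R) : R := f 0%nat + f 1%nat + f 2%nat.

Definition cof3 (M : nat -> nat -> R) (i j : nat) : R :=
  M ((i+1) mod 3)%nat ((j+1) mod 3)%nat * M ((i+2) mod 3)%nat ((j+2) mod 3)%nat
  - M ((i+1) mod 3)%nat ((j+2) mod 3)%nat * M ((i+2) mod 3)%nat ((j+1) mod 3)%nat.
Definition det3 (M : nat -> nat -> R) : R := sum3 (fun j => M 0%nat j * cof3 M 0%nat j).
Definition inv3 (M : nat -> nat -> R) (i j : nat) : R := cof3 M j i / det3 M.

Definition gm (A B : pt -> R) (i j : nat) (p : pt) : R :=
  if Nat.eqb i j then (if Nat.eqb i 2 then B p else A p) else 0.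
Definition ginv (A B : pt -> R) (i j : nat) (p : pt) : R :=
  inv3 (fun a b => gm A B a b p) i j.

(** Q as a matrix: Q d_j = sum_i Qm i j d_i. *)
Definition Qm (i j : nat) : R :=
  match i, j with
  | 1%nat, 0%nat => 1
  | 0%nat, 1%nat => -1
  | 2%nat, 2%nat => 1
  | _, _ => 0
  end.
Definition Pm (i j : nat) : R := sum3 (fun k => Qm i k * Qm k j).

Definition gtm (A B : pt -> R) (i j : nat) (p : pt) : R :=
  sum3 (fun k => gm A B i k p * Pm k j).
Definition gtinv (A B : pt -> R) (i j : nat) (p : pt) : R :=
  inv3 (fun a b => gtm A B a b p) i j.

(** Christoffel symbols of the Levi-Civita connection: nabla_{d_i} d_j = Gamma^k_{ij} d_k. *)
Definition Gam (A B : pt -> R) (k i j : nat) (p : pt) : R :=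
  / 2 * sum3 (fun l => ginv A B k l p *
    (pd i (gm A B j l) p + pd j (gm A B i l) p - pd l (gm A B i j) p)).

Definition vfield : Type := pt -> nat -> R.

Definition nabla (A B : pt -> R) (X Y : vfield) : vfield := fun p k =>
  sum3 (fun i => X p i *
    (pd i (fun q => Y q k) p + sum3 (fun j => Gam A B k i j p * Y p j))).

Definition bracket (X Y : vfield) : vfield := fun p k =>
  sum3 (fun i => X p i * pd i (fun q => Y q k) p - Y p i * pd i (fun q => X q k) p).

Definition Rop (A B : pt -> R) (X Y Z : vfield) : vfield := fun p k =>
  nabla A B X (nabla A B Y Z) p k - nabla A B Y (nabla A B X Z) p k
  - nabla A B (bracket X Y) Z p k.

Definition R4 (A B : pt -> R) (X Y Z T : vfield) (p : pt) : R :=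
  sum3 (fun k => sum3 (fun l => gm A B k l p * Rop A B X Y Z p k * T p l)).

Definition cf (i : nat) : vfield := fun _ k => if Nat.eqb k i then 1 else 0.

Definition ric (A B : pt -> R) (a b : nat) (p : pt) : R :=
  sum3 (fun i => sum3 (fun j => ginv A B i j p * R4 A B (cf i) (cf a) (cf b) (cf j) p)).

Definition tau (A B : pt -> R) (p : pt) : R :=
  sum3 (fun i => sum3 (fun j => ginv A B i j p * ric A B i j p)).
Definition taus (A B : pt -> R) (p : pt) : R :=
  sum3 (fun i => sum3 (fun j => gtinv A B i j p * ric A B i j p)).

Definition pi1 (A B : pt -> R) (x y z u : nat) (p : pt) : R :=
  gm A B y z p * gm A B x u p - gm A B x z p * gm A B y u p.
Definition pi2 (A B : pt -> R) (x y z u : nat) (p : pt) : R :=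
  gm A B y z p * gtm A B x u p + gm A B x u p * gtm A B y z p
  - gm A B x z p * gtm A B y u p - gm A B y u p * gtm A B x z p.

From Stdlib Require Import Reals Lra Lia List FunctionalExtensionality.
From Coquelicot Require Import Coquelicot.
Open Scope R_scope.

(* In dimension three the Weyl tensor vanishes: every algebraic curvature tensor
   (antisymmetric in each pair of arguments, satisfying the first Bianchi identity) is
   determined by its Ricci contraction,
     R(x,y,z,u) = rho(y,z) g(x,u) + rho(x,u) g(y,z) - rho(x,z) g(y,u) - rho(y,u) g(x,z)
                  - (tau / 2) pi_1(x,y,z,u).
   Substituting rho = a g + b g~ gives R = (2a - tau/2) pi_1 + b pi_2, and for
   a = (3 tau + tau^* ) / 8 the first coefficient is (tau + tau^* ) / 4.
   The analytic input is that the coordinate curvature of the Levi-Civita connection has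
   these symmetries: antisymmetry in (x,y) is formal, the Bianchi identity comes from the
   symmetry of the Christoffel symbols, and antisymmetry in (z,u) is metric compatibility,
   which uses the symmetry of the second partial derivatives of A and B. *)

Section AlgebraicCurvature.
Variable T : nat -> nat -> nat -> nat -> R.
Hypothesis T_antisym12 : forall x y z u, (x < 3)%nat -> (y < 3)%nat -> (z < 3)%nat ->
  (u < 3)%nat -> T x y z u = - T y x z u.
Hypothesis T_antisym34 : forall x y z u, (x < 3)%nat -> (y < 3)%nat -> (z < 3)%nat ->
  (u < 3)%nat -> T x y z u = - T x y u z.
Hypothesis T_bianchi : forall x y z u, (x < 3)%nat -> (y < 3)%nat -> (z < 3)%nat ->
  (u < 3)%nat -> T x y z u + T y z x u + T z x y u = 0.

Lemma pair_sym_of_bianchi x y z u : (x < 3)%nat -> (y < 3)%nat -> (z < 3)%nat -> (u < 3)%nat ->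
  T x y z u = T z u x y.
Proof.
  intros Hx Hy Hz Hu.
  (* [2 (T x y z u - T z u x y)] is an alternating sum of these four Bianchi identities. *)
  pose proof (T_bianchi x y z u Hx Hy Hz Hu).
  pose proof (T_bianchi x y u z Hx Hy Hu Hz).
  pose proof (T_bianchi x z u y Hx Hz Hu Hy).
  pose proof (T_bianchi y z u x Hy Hz Hu Hx).
  pose proof (T_antisym34 x y u z Hx Hy Hu Hz).
  pose proof (T_antisym12 x z u y Hx Hz Hu Hy).
  pose proof (T_antisym34 z x u y Hz Hx Hu Hy).
  pose proof (T_antisym34 u x z y Hu Hx Hz Hy).
  pose proof (T_antisym34 y z u x Hy Hz Hu Hx).
  pose proof (T_antisym34 z u y x Hz Hu Hy Hx).
  pose proof (T_antisym12 u y z x Hu Hy Hz Hx).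
  pose proof (T_antisym34 y u z x Hy Hu Hz Hx).
  lra.
Qed.

Variable g : nat -> nat -> R.
Hypothesis g_offdiag : forall i j, i <> j -> g i j = 0.
Hypothesis g_diag_neq0 : forall i, (i < 3)%nat -> g i i <> 0.

Definition ricci_contr (y z : nat) : R := sum3 (fun i => / g i i * T i y z i).
Definition scalar_contr : R := sum3 (fun i => / g i i * ricci_contr i i).

Lemma curvature_eq_ricci_dim3 x y z u :
  (x < 3)%nat -> (y < 3)%nat -> (z < 3)%nat -> (u < 3)%nat ->
  T x y z u =
    ricci_contr y z * g x u + ricci_contr x u * g y z
    - ricci_contr x z * g y u - ricci_contr y u * g x z
    - scalar_contr / 2 * (g y z * g x u - g x z * g y u).
Proof.
  intros Hx Hy Hz Hu.
  assert (T_zero12 : forall i k l, (i < 3)%nat -> (k < 3)%nat -> (l < 3)%nat -> T i i k l = 0).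
  { intros i k l Hi Hk Hl. pose proof (T_antisym12 i i k l Hi Hi Hk Hl). lra. }
  assert (T_zero34 : forall i j k, (i < 3)%nat -> (j < 3)%nat -> (k < 3)%nat -> T i j k k = 0).
  { intros i j k Hi Hj Hk. pose proof (T_antisym34 i j k k Hi Hj Hk Hk). lra. }
  pose proof (g_diag_neq0 0 ltac:(lia)). pose proof (g_diag_neq0 1 ltac:(lia)).
  pose proof (g_diag_neq0 2 ltac:(lia)).
  unfold scalar_contr, ricci_contr, sum3.
  destruct x as [|[|[|x]]]; try lia; destruct y as [|[|[|y]]]; try lia;
  destruct z as [|[|[|z]]]; try lia; destruct u as [|[|[|u]]]; try lia;
  (* bring every component to the form [T i j k l] with [i < j], [k < l], [(i,j) <= (k,l)] *)
  repeat match goal with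
  | |- context [g ?i ?j] =>
      lazymatch eval compute in (Nat.eqb i j) with false => rewrite (g_offdiag i j) by lia end
  | |- context [T ?i ?j ?k ?l] =>
    first [
      lazymatch eval compute in (Nat.eqb i j) with true => rewrite (T_zero12 i k l) by lia end
    | lazymatch eval compute in (Nat.eqb k l) with true => rewrite (T_zero34 i j k) by lia end
    | lazymatch eval compute in (Nat.ltb j i) with true => rewrite (T_antisym12 i j k l) by lia end
    | lazymatch eval compute in (Nat.ltb l k) with true => rewrite (T_antisym34 i j k l) by lia end
    | lazymatch eval compute in (orb (Nat.ltb k i) (andb (Nat.eqb k i) (Nat.ltb l j))) with
        true => rewrite (pair_sym_of_bianchi i j k l) by lia end ]
  end;
  field; repeat split; assumption.
Qed.
End AlgebraicCurvature.

Ltac pair_ring := repeat match goal with |- (_, _) = (_, _) => f_equal end; try ring.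

Lemma shift_shift i q a b : shift i (shift i q a) b = shift i q (a + b).
Proof. destruct q as [[x y] z]; destruct i as [|[|i]]; simpl; pair_ring. Qed.

Lemma shift_comm i j q a b : shift i (shift j q b) a = shift j (shift i q a) b.
Proof.
  destruct q as [[x y] z]; destruct i as [|[|i]]; destruct j as [|[|j]]; simpl; pair_ring.
Qed.

Lemma shift_0 i q : shift i q 0 = q.
Proof. destruct q as [[x y] z]; destruct i as [|[|i]]; simpl; pair_ring. Qed.

Lemma ball_R (x y e : R) : Rabs (y - x) < e -> ball x e y.
Proof. easy. Qed.

Lemma ball_shift_shift p (e : R) i j a b :
  Rabs a < e / 2 -> Rabs b < e / 2 -> ball p e (shift i (shift j p b) a).
Proof.
  intros Ha Hb. destruct p as [[x y] z].
  assert (He : 0 < e) by (pose proof (Rabs_pos a); lra).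
  assert (H0 : Rabs 0 < e) by (rewrite Rabs_R0; exact He).
  assert (Hab : Rabs (a + b) < e) by (eapply Rle_lt_trans; [apply Rabs_triang | lra]).
  assert (Ha' : Rabs a < e) by lra.
  assert (Hb' : Rabs b < e) by lra.
  destruct i as [|[|i]]; destruct j as [|[|j]]; simpl; (split; [split|]); apply ball_R; simpl;
  match goal with |- Rabs ?t < _ =>
    first [ replace t with 0 by ring; exact H0 | replace t with a by ring; exact Ha'
          | replace t with b by ring; exact Hb' | replace t with (a + b) by ring; exact Hab ] end.
Qed.

Lemma open_shift_shift U p : open U -> U p -> exists e, 0 < e /\
  forall i j a b, Rabs a < e -> Rabs b < e -> U (shift i (shift j p b) a).
Proof.
  intros HU Hp. destruct (HU p Hp) as [[e He] Hball]; simpl in Hball.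
  exists (e / 2). split; [lra|].
  intros i j a b Ha Hb. apply Hball, ball_shift_shift; assumption.
Qed.

Lemma open_shift U p : open U -> U p -> exists e, 0 < e /\
  forall i a, Rabs a < e -> U (shift i p a).
Proof.
  intros HU Hp. destruct (open_shift_shift U p HU Hp) as [e [He Hnear]].
  exists e. split; [exact He|]. intros i a Ha.
  rewrite <- (shift_0 i p), shift_comm. apply Hnear; [rewrite Rabs_R0; exact He | exact Ha].
Qed.

Lemma Derive_translate (g : R -> R) a : Derive g a = Derive (fun s => g (a + s)) 0.
Proof.
  unfold Derive. f_equal. apply Lim_ext. intros h. now rewrite Rplus_0_l, Rplus_0_r.
Qed.

Lemma ex_derive_translate (g : R -> R) a : ex_derive (fun s => g (a + s)) 0 -> ex_derive g a.
Proof.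
  intros H.
  apply (ex_derive_ext (fun x => (fun s => g (a + s)) (x - a))); [intros t; simpl; f_equal; ring|].
  apply (ex_derive_comp (fun s => g (a + s)) (fun x => x - a)).
  - now replace (a - a) with 0 by ring.
  - auto_derive; auto.
Qed.

Lemma Derive_shift (h : pt -> R) i q a :
  Derive (fun t => h (shift i q t)) a = pd i h (shift i q a).
Proof.
  rewrite Derive_translate. apply Derive_ext. intros t. now rewrite shift_shift.
Qed.

Definition ex_pd (i : nat) (f : pt -> R) (p : pt) : Prop :=
  ex_derive (fun t => f (shift i p t)) 0.

Lemma ex_derive_shift (h : pt -> R) i q a :
  ex_pd i h (shift i q a) -> ex_derive (fun t => h (shift i q t)) a.
Proof.
  intros H. apply ex_derive_translate. eapply ex_derive_ext; [|exact H].
  intros t. simpl. now rewrite shift_shift.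
Qed.

Definition indices3 (l : list nat) : Prop := forall i, In i l -> (i < 3)%nat.

Lemma indices3_nil : indices3 nil.
Proof. intros k []. Qed.

Lemma indices3_cons i l : (i < 3)%nat -> indices3 l -> indices3 (i :: l).
Proof. intros Hi Hl k [<-|Hk]; auto. Qed.

Global Hint Resolve indices3_nil indices3_cons : core.

Lemma smooth_ex_pd U f l i q : smooth_on U f -> indices3 l -> U q -> (i < 3)%nat ->
  ex_pd i (iterpd l f) q.
Proof. intros Hs Hl Hq Hi. now apply (Hs l Hl q Hq). Qed.

Lemma smooth_continuous U f l q : smooth_on U f -> indices3 l -> U q ->
  continuous (iterpd l f) q.
Proof. intros Hs Hl Hq. now apply (Hs l Hl q Hq). Qed.

Lemma continuity_2d_shift (g : pt -> R) p i j : continuous g p ->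
  continuity_2d_pt (fun u v => g (shift i (shift j p v) u)) 0 0.
Proof.
  intros Hc eps. apply filterlim_locally with (eps := eps) in Hc.
  destruct Hc as [[d Hd] Hball]; simpl in Hball.
  assert (Hd2 : 0 < d / 2) by lra.
  exists (mkposreal _ Hd2). simpl. intros u v Hu Hv.
  rewrite Rminus_0_r in Hu, Hv. rewrite !shift_0.
  apply (Hball (shift i (shift j p v) u)), ball_shift_shift; assumption.
Qed.

Section Schwarz.
Variables (U : pt -> Prop) (f : pt -> R) (p : pt) (i j : nat).
Hypotheses (HU : open U) (Hf : smooth_on U f) (Hp : U p) (Hi : (i < 3)%nat) (Hj : (j < 3)%nat).

Let F z t := f (shift j (shift i p z) t).

Let Derive_F_snd z v : Derive (fun t => F z t) v = pd j f (shift i (shift j p v) z).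
Proof. unfold F. now rewrite Derive_shift, shift_comm. Qed.

Let Derive_F_fst z u : Derive (fun t => F t z) u = pd i f (shift i (shift j p z) u).
Proof.
  unfold F. erewrite Derive_ext by (intros t; now rewrite shift_comm). apply Derive_shift.
Qed.

Let F_derivable_near : locally_2d (fun u v =>
  ex_derive (fun z => F z v) u /\ ex_derive (fun z => F u z) v /\
  ex_derive (fun z => Derive (fun t => F z t) v) u /\
  ex_derive (fun z => Derive (fun t => F t z) u) v) 0 0.
Proof.
  destruct (open_shift_shift U p HU Hp) as [e [He Hnear]].
  exists (mkposreal e He). simpl. intros u v Hu Hv. rewrite Rminus_0_r in Hu, Hv.
  repeat split.
  - unfold F. eapply ex_derive_ext; [intros t; now rewrite shift_comm|].
    apply ex_derive_shift. apply (smooth_ex_pd U f nil); auto.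
  - unfold F. apply ex_derive_shift. rewrite shift_comm. apply (smooth_ex_pd U f nil); auto.
  - apply (ex_derive_ext (fun z => pd j f (shift i (shift j p v) z))).
    { intros t. now rewrite Derive_F_snd. }
    apply ex_derive_shift. apply (smooth_ex_pd U f (j :: nil)); auto.
  - apply (ex_derive_ext (fun z => pd i f (shift j (shift i p u) z))).
    { intros t. now rewrite Derive_F_fst, shift_comm. }
    apply ex_derive_shift. rewrite shift_comm. apply (smooth_ex_pd U f (i :: nil)); auto.
Qed.

Lemma pd_comm : pd i (pd j f) p = pd j (pd i f) p.
Proof.
  assert (Hij : pd i (pd j f) p = Derive (fun z => Derive (fun t => F z t) 0) 0).
  { apply Derive_ext. intros z. now rewrite Derive_F_snd, shift_0. }
  assert (Hji : pd j (pd i f) p = Derive (fun t => Derive (fun z => F z t) 0) 0).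
  { apply Derive_ext. intros z. now rewrite Derive_F_fst, shift_0. }
  rewrite Hij, Hji. apply Schwarz; [exact F_derivable_near | |].
  - eapply continuity_2d_pt_ext.
    { intros u v. symmetry. erewrite Derive_ext by (intros z; now rewrite Derive_F_snd).
      apply Derive_shift. }
    apply continuity_2d_shift, (smooth_continuous U f (i :: j :: nil)); auto.
  - eapply continuity_2d_pt_ext.
    { intros u v. symmetry.
      erewrite Derive_ext by (intros z; now rewrite Derive_F_fst, shift_comm).
      now rewrite Derive_shift, shift_comm. }
    apply continuity_2d_shift, (smooth_continuous U f (j :: i :: nil)); auto.
Qed.

End Schwarz.

Lemma pd_ext i f h p : (forall q, f q = h q) -> pd i f p = pd i h p.
Proof. intros H. apply Derive_ext. intros; apply H. Qed.

Lemma pd_ext_loc U i f h p : open U -> U p -> (forall q, U q -> f q = h q) ->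
  pd i f p = pd i h p.
Proof.
  intros HU Hp H. apply Derive_ext_loc.
  destruct (open_shift U p HU Hp) as [e [He Hnear]]. exists (mkposreal e He).
  intros t Ht. apply H, Hnear. now rewrite <- (Rminus_0_r t).
Qed.

Lemma pd_const i c p : pd i (fun _ => c) p = 0.
Proof. apply (Derive_const c). Qed.

Lemma pd_const_fun i c : pd i (fun _ : pt => c) = fun _ => 0.
Proof. apply functional_extensionality. intros; apply pd_const. Qed.

Lemma pd_plus i f h p : ex_pd i f p -> ex_pd i h p ->
  pd i (fun q => f q + h q) p = pd i f p + pd i h p.
Proof.
  intros. apply (Derive_plus (fun t => f (shift i p t)) (fun t => h (shift i p t))); auto.
Qed.

Lemma pd_minus i f h p : ex_pd i f p -> ex_pd i h p ->
  pd i (fun q => f q - h q) p = pd i f p - pd i h p.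
Proof.
  intros. apply (Derive_minus (fun t => f (shift i p t)) (fun t => h (shift i p t))); auto.
Qed.

Lemma pd_mult i f h p : ex_pd i f p -> ex_pd i h p ->
  pd i (fun q => f q * h q) p = pd i f p * h p + f p * pd i h p.
Proof.
  intros. unfold pd. rewrite (Derive_mult (fun t => f (shift i p t)) (fun t => h (shift i p t)));
    auto.
  now rewrite shift_0.
Qed.

Lemma pd_scal i c f p : pd i (fun q => c * f q) p = c * pd i f p.
Proof. apply (Derive_scal (fun t => f (shift i p t))). Qed.

Lemma pd_inv i f p : ex_pd i f p -> f p <> 0 -> pd i (fun q => / f q) p = - pd i f p / (f p) ^ 2.
Proof.
  intros H1 H2. unfold pd. rewrite (Derive_inv (fun t => f (shift i p t))); rewrite ?shift_0; auto.
Qed.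

Lemma ex_pd_plus i f h p : ex_pd i f p -> ex_pd i h p -> ex_pd i (fun q => f q + h q) p.
Proof.
  intros. apply (ex_derive_plus (fun t => f (shift i p t)) (fun t => h (shift i p t))); auto.
Qed.

Lemma ex_pd_minus i f h p : ex_pd i f p -> ex_pd i h p -> ex_pd i (fun q => f q - h q) p.
Proof.
  intros. apply (ex_derive_minus (fun t => f (shift i p t)) (fun t => h (shift i p t))); auto.
Qed.

Lemma ex_pd_inv i f p : ex_pd i f p -> f p <> 0 -> ex_pd i (fun q => / f q) p.
Proof. intros. apply (ex_derive_inv (fun t => f (shift i p t))); rewrite ?shift_0; auto. Qed.

Lemma iterpd_const l c : l <> nil -> iterpd l (fun _ : pt => c) = fun _ => 0.
Proof.
  destruct l as [|i l]; [congruence|]. intros _. revert i.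
  induction l as [|j l IH]; intros i; apply functional_extensionality; intros q.
  - exact (pd_const i c q).
  - change (pd i (iterpd (j :: l) (fun _ => c)) q = 0). rewrite (IH j). apply pd_const.
Qed.

Lemma smooth_const U c : smooth_on U (fun _ => c).
Proof.
  intros [|i l] Hl q Hq.
  - split; [apply continuous_const | intros; apply (ex_derive_const c)].
  - rewrite iterpd_const by congruence.
    split; [apply continuous_const | intros; apply ex_derive_const].
Qed.

Lemma gm_fun A B i j :
  gm A B i j = if Nat.eqb i j then (if Nat.eqb i 2 then B else A) else fun _ => 0.
Proof.
  apply functional_extensionality. intros q. unfold gm.
  destruct (Nat.eqb i j), (Nat.eqb i 2); reflexivity.
Qed.

Lemma gm_sym A B i j : gm A B i j = gm A B j i.
Proof.
  rewrite !gm_fun, Nat.eqb_sym. destruct (Nat.eqb_spec j i) as [->|]; reflexivity.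
Qed.

Lemma smooth_gm U A B i j : smooth_on U A -> smooth_on U B -> smooth_on U (gm A B i j).
Proof.
  intros HA HB. rewrite gm_fun. destruct (Nat.eqb i j), (Nat.eqb i 2); auto using smooth_const.
Qed.

Lemma ginv_diag A B k l q : A q <> 0 -> B q <> 0 -> (k < 3)%nat -> (l < 3)%nat ->
  ginv A B k l q = if Nat.eqb k l then / gm A B k k q else 0.
Proof.
  intros HA HB Hk Hl. unfold ginv, inv3, det3, sum3, cof3, gm.
  destruct k as [|[|[|k]]]; try lia; destruct l as [|[|[|l]]]; try lia; simpl; try field; auto.
Qed.

(* Twice the Christoffel symbol of the first kind, [2 Γ_{k,ij}]. *)
Definition christ1 A B k i j q :=
  pd i (gm A B j k) q + pd j (gm A B i k) q - pd k (gm A B i j) q.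

Lemma Gam_diag A B k i j q : A q <> 0 -> B q <> 0 -> (k < 3)%nat ->
  Gam A B k i j q = / 2 * (/ gm A B k k q * christ1 A B k i j q).
Proof.
  intros HA HB Hk. unfold Gam, sum3, christ1.
  rewrite !(ginv_diag A B k) by (auto; lia).
  destruct k as [|[|[|k]]]; try lia; simpl; ring.
Qed.

Lemma Gam_sym A B k i j : Gam A B k i j = Gam A B k j i.
Proof.
  apply functional_extensionality. intros q. unfold Gam, sum3.
  rewrite (gm_sym A B i j). ring.
Qed.

Section Christoffel.
Variables (U : pt -> Prop) (A B : pt -> R).
Hypotheses (HU : open U) (HsA : smooth_on U A) (HsB : smooth_on U B)
  (HA : forall p, U p -> 0 < A p) (HB : forall p, U p -> 0 < B p).

Lemma gm_diag_neq0 k q : U q -> (k < 3)%nat -> gm A B k k q <> 0.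
Proof.
  intros Hq Hk. unfold gm. rewrite Nat.eqb_refl.
  destruct (Nat.eqb k 2); [specialize (HB q Hq) | specialize (HA q Hq)]; lra.
Qed.

Lemma ex_pd_gm l i j k q : U q -> (i < 3)%nat -> indices3 l ->
  ex_pd i (iterpd l (gm A B j k)) q.
Proof. intros. apply (smooth_ex_pd U); auto using smooth_gm. Qed.

Lemma pd_Gam x k i j p : U p -> (x < 3)%nat -> (k < 3)%nat -> (i < 3)%nat -> (j < 3)%nat ->
  pd x (Gam A B k i j) p =
  / 2 * ((- pd x (gm A B k k) p / (gm A B k k p) ^ 2) * christ1 A B k i j p
         + / gm A B k k p * (pd x (pd i (gm A B j k)) p + pd x (pd j (gm A B i k)) p
                             - pd x (pd k (gm A B i j)) p)).
Proof.
  intros Hp Hx Hk Hi Hj.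
  rewrite (pd_ext_loc U x _ (fun q => / 2 * ((fun q => / gm A B k k q) q * christ1 A B k i j q))
             p HU Hp).
  2:{ intros q Hq. apply Gam_diag; auto; [specialize (HA q Hq) | specialize (HB q Hq)]; lra. }
  assert (Hg : ex_pd x (gm A B k k) p) by (apply (ex_pd_gm nil); auto).
  assert (Hdg : forall a b c, (a < 3)%nat -> ex_pd x (pd a (gm A B b c)) p)
    by (intros; apply (ex_pd_gm (a :: nil)); auto).
  assert (Hgk : gm A B k k p <> 0) by (apply gm_diag_neq0; auto).
  rewrite pd_scal, pd_mult, pd_inv by
    (auto; unfold christ1; auto using ex_pd_inv, ex_pd_plus, ex_pd_minus).
  unfold christ1 at 2. rewrite pd_minus, pd_plus by auto using ex_pd_plus.
  reflexivity.
Qed.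

End Christoffel.

Lemma pd_cf i j k q : pd i (fun q => cf j q k) q = 0.
Proof. unfold cf. apply pd_const. Qed.

Lemma nabla_cf A B i Y q k : (i < 3)%nat ->
  nabla A B (cf i) Y q k = pd i (fun q => Y q k) q + sum3 (fun j => Gam A B k i j q * Y q j).
Proof. intros Hi. unfold nabla, sum3, cf. destruct i as [|[|[|i]]]; try lia; simpl; ring. Qed.

Lemma nabla_cf_cf A B i j q k : (i < 3)%nat -> (j < 3)%nat ->
  nabla A B (cf i) (cf j) q k = Gam A B k i j q.
Proof.
  intros Hi Hj. rewrite nabla_cf, pd_cf by auto. unfold sum3, cf.
  destruct j as [|[|[|j]]]; try lia; simpl; ring.
Qed.

Lemma bracket_cf i j q k : bracket (cf i) (cf j) q k = 0.
Proof. unfold bracket, sum3. rewrite !pd_cf. ring. Qed.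

Lemma Rop_cf A B x y z p k : (x < 3)%nat -> (y < 3)%nat -> (z < 3)%nat ->
  Rop A B (cf x) (cf y) (cf z) p k =
  pd x (Gam A B k y z) p - pd y (Gam A B k x z) p
  + sum3 (fun j => Gam A B k x j p * Gam A B j y z p - Gam A B k y j p * Gam A B j x z p).
Proof.
  intros Hx Hy Hz. unfold Rop. rewrite !nabla_cf by auto.
  rewrite (pd_ext x _ (Gam A B k y z)) by (intros; apply nabla_cf_cf; auto).
  rewrite (pd_ext y _ (Gam A B k x z)) by (intros; apply nabla_cf_cf; auto).
  unfold nabla at 3. unfold sum3. rewrite !bracket_cf, !nabla_cf_cf by lia. ring.
Qed.

Lemma R4_cf A B x y z u p : (u < 3)%nat ->
  R4 A B (cf x) (cf y) (cf z) (cf u) p = gm A B u u p * Rop A B (cf x) (cf y) (cf z) p u.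
Proof. intros. unfold R4, sum3, cf. destruct u as [|[|[|u]]]; try lia; unfold gm; simpl; ring. Qed.

Lemma R4_antisym12 A B x y z u p : (x < 3)%nat -> (y < 3)%nat -> (z < 3)%nat -> (u < 3)%nat ->
  R4 A B (cf x) (cf y) (cf z) (cf u) p = - R4 A B (cf y) (cf x) (cf z) (cf u) p.
Proof. intros. rewrite !R4_cf, !Rop_cf by auto. unfold sum3. ring. Qed.

Lemma R4_bianchi A B x y z u p : (x < 3)%nat -> (y < 3)%nat -> (z < 3)%nat -> (u < 3)%nat ->
  R4 A B (cf x) (cf y) (cf z) (cf u) p + R4 A B (cf y) (cf z) (cf x) (cf u) p
  + R4 A B (cf z) (cf x) (cf y) (cf u) p = 0.
Proof.
  intros. rewrite !R4_cf, !Rop_cf by auto. unfold sum3.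
  rewrite !(Gam_sym A B _ z x), !(Gam_sym A B _ y x), !(Gam_sym A B _ z y). ring.
Qed.

(* Metric compatibility, checked in each of the 81 coordinate cases. *)
Lemma R4_antisym34 U A B x y z u p : open U -> smooth_on U A -> smooth_on U B ->
  (forall p, U p -> 0 < A p) -> (forall p, U p -> 0 < B p) -> U p ->
  (x < 3)%nat -> (y < 3)%nat -> (z < 3)%nat -> (u < 3)%nat ->
  R4 A B (cf x) (cf y) (cf z) (cf u) p = - R4 A B (cf x) (cf y) (cf u) (cf z) p.
Proof.
  intros HU HsA HsB HA HB Hp Hx Hy Hz Hu.
  assert (Ha : A p <> 0) by (specialize (HA p Hp); lra).
  assert (Hb : B p <> 0) by (specialize (HB p Hp); lra).
  rewrite !R4_cf, !Rop_cf, !(pd_Gam U A B) by auto.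
  unfold sum3. rewrite !(Gam_diag A B) by (auto; lia).
  unfold christ1. rewrite !gm_fun.
  assert (sA01 := pd_comm U A p 1 0 HU HsA Hp ltac:(lia) ltac:(lia)).
  assert (sA02 := pd_comm U A p 2 0 HU HsA Hp ltac:(lia) ltac:(lia)).
  assert (sA12 := pd_comm U A p 2 1 HU HsA Hp ltac:(lia) ltac:(lia)).
  assert (sB01 := pd_comm U B p 1 0 HU HsB Hp ltac:(lia) ltac:(lia)).
  assert (sB02 := pd_comm U B p 2 0 HU HsB Hp ltac:(lia) ltac:(lia)).
  assert (sB12 := pd_comm U B p 2 1 HU HsB Hp ltac:(lia) ltac:(lia)).
  destruct x as [|[|[|x]]]; try lia; destruct y as [|[|[|y]]]; try lia;
  destruct z as [|[|[|z]]]; try lia; destruct u as [|[|[|u]]]; try lia;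
  simpl; rewrite ?pd_const_fun, ?pd_const;
  repeat match goal with H : pd ?i (pd ?j ?f) ?q = _ |- context [pd ?i (pd ?j ?f) ?q] =>
    rewrite H end;
  field; repeat split; assumption.
Qed.

Lemma ric_diag A B a b p : A p <> 0 -> B p <> 0 ->
  ric A B a b p = sum3 (fun i => / gm A B i i p * R4 A B (cf i) (cf a) (cf b) (cf i) p).
Proof. intros. unfold ric, sum3. rewrite !(ginv_diag A B) by (auto; lia). simpl. ring. Qed.

Lemma tau_diag A B p : A p <> 0 -> B p <> 0 ->
  tau A B p = sum3 (fun i => / gm A B i i p * ric A B i i p).
Proof. intros. unfold tau, sum3. rewrite !(ginv_diag A B) by (auto; lia). simpl. ring. Qed.

Lemma R4_ricci_decomposition U A B x y z u p : open U -> smooth_on U A -> smooth_on U B ->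
  (forall p, U p -> 0 < A p) -> (forall p, U p -> 0 < B p) -> U p ->
  (x < 3)%nat -> (y < 3)%nat -> (z < 3)%nat -> (u < 3)%nat ->
  R4 A B (cf x) (cf y) (cf z) (cf u) p =
    ric A B y z p * gm A B x u p + ric A B x u p * gm A B y z p
    - ric A B x z p * gm A B y u p - ric A B y u p * gm A B x z p
    - tau A B p / 2 * pi1 A B x y z u p.
Proof.
  intros HU HsA HsB HA HB Hp Hx Hy Hz Hu.
  assert (Ha : A p <> 0) by (specialize (HA p Hp); lra).
  assert (Hb : B p <> 0) by (specialize (HB p Hp); lra).
  set (T i j k l := R4 A B (cf i) (cf j) (cf k) (cf l) p).
  set (g i j := gm A B i j p).
  assert (Hric : forall a b, ric A B a b p = ricci_contr T g a b) by (intros; now apply ric_diag).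
  assert (Htau : tau A B p = scalar_contr T g)
    by (rewrite tau_diag by auto; unfold scalar_contr, sum3; now rewrite !Hric).
  assert (HT12 : forall i j k l, (i < 3)%nat -> (j < 3)%nat -> (k < 3)%nat -> (l < 3)%nat ->
    T i j k l = - T j i k l) by (intros; now apply R4_antisym12).
  assert (HT34 : forall i j k l, (i < 3)%nat -> (j < 3)%nat -> (k < 3)%nat -> (l < 3)%nat ->
    T i j k l = - T i j l k) by (intros; now apply (R4_antisym34 U)).
  assert (HTb : forall i j k l, (i < 3)%nat -> (j < 3)%nat -> (k < 3)%nat -> (l < 3)%nat ->
    T i j k l + T j k i l + T k i j l = 0) by (intros; now apply R4_bianchi).
  assert (Hg0 : forall i j, i <> j -> g i j = 0)
    by (intros i j Hij; unfold g, gm; now rewrite (proj2 (Nat.eqb_neq i j))).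
  assert (Hgd : forall i, (i < 3)%nat -> g i i <> 0) by (intros; now apply (gm_diag_neq0 U)).
  rewrite !Hric, Htau. unfold pi1.
  exact (curvature_eq_ricci_dim3 T HT12 HT34 HTb g Hg0 Hgd x y z u Hx Hy Hz Hu).
Qed.

Theorem theorem5p9 (U : pt -> Prop) (A B : pt -> R) :
  open U ->
  smooth_on U A -> smooth_on U B ->
  (forall p, U p -> 0 < A p) -> (forall p, U p -> 0 < B p) ->
  (forall p, U p -> forall a b : nat, (a < 3)%nat -> (b < 3)%nat ->
     ric A B a b p =
       (3 * tau A B p + taus A B p) / 8 * gm A B a b p
       + (3 * taus A B p + tau A B p) / 8 * gtm A B a b p) ->
  forall p, U p -> forall x y z u : nat,
    (x < 3)%nat -> (y < 3)%nat -> (z < 3)%nat -> (u < 3)%nat ->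
    R4 A B (cf x) (cf y) (cf z) (cf u) p =
      (tau A B p + taus A B p) / 4 * pi1 A B x y z u p
      + (3 * taus A B p + tau A B p) / 8 * pi2 A B x y z u p.
Proof.
  intros HU HsA HsB HA HB Hric p Hp x y z u Hx Hy Hz Hu.
  rewrite (R4_ricci_decomposition U) by auto.
  rewrite (Hric p Hp y z), (Hric p Hp x u), (Hric p Hp x z), (Hric p Hp y u) by auto.
  unfold pi1, pi2. field.
Qed.
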